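(* (1) Every PP-rich set in $(\mathbb{N},+)$ contains a family of $2^\omega$ almost disjoint subsets each of which is PP-rich. (2) Every PP-rich set in $(\mathbb{N},+)$ can be split into $\omega$ pairwise disjoint subsets each of which is PP-rich.
   Context: $\mathbb{N}=\{1,2,\dots\}$. $\mathbb{P}$ denotes the set of polynomials with coefficients in $\mathbb{N}\cup\{0\}$ and zero constant term which map $\mathbb{N}$ into $\mathbb{N}$; $\mathcal{P}_f(\mathbb{P})$ is the set of nonempty finite subsets of $\mathbb{P}$. $A\subseteq\mathbb{N}$ is PP-rich if for every $R\in\mathcal{P}_f(\mathbb{P})$ there exist $a,x\in\mathbb{N}$ with $\{a+f(x): f\in R\}\subseteq A$. For an infinite set $X$, a family of almost disjoint subsets of $X$ consists of subsets of $X$ of cardinality $|X|$ any two distinct of which meet in a set of cardinality less than $|X|$. *)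

From mathcomp Require Import all_boot all_algebra.
Set Implicit Arguments. Unset Strict Implicit. Unset Printing Implicit Defensive.
Local Open Scope ring_scope.

(* Subsets of nat are predicates nat -> Prop.  N = {1,2,...}. *)

Definition inPP (f : {poly nat}) : Prop :=
  f`_0 = 0%N /\ (forall x : nat, (0 < x)%N -> (0 < f.[x])%N).

Definition PP_rich (A : nat -> Prop) : Prop :=
  forall R : seq {poly nat}, R <> [::] -> (forall f, f \in R -> inPP f) ->
    exists a x : nat, (0 < a)%N /\ (0 < x)%N /\
      (forall f, f \in R -> A (a + f.[x])%N).

Definition subset_N (A : nat -> Prop) : Prop := forall n, A n -> (0 < n)%N.

Definition finite_nat (A : nat -> Prop) : Prop :=
  exists m : nat, forall n, A n -> (n < m)%N.

From mathcomp Require Import all_boot all_algebra zify.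
From Stdlib Require Import ClassicalEpsilon Classical FunctionalExtensionality.
Set Implicit Arguments. Unset Strict Implicit. Unset Printing Implicit Defensive.
Import GRing.Theory.
Local Open Scope ring_scope.
Local Open Scope nat_scope.

(** A PP-rich set realizes every configuration {a + f(x) : f in R} above any
    prescribed bound m (apply richness to the polynomials f + mX).  Running
    through an enumeration of the configurations and choosing each realization
    above the previous ones yields pairwise disjoint finite blocks of A.  For
    (1), index the blocks by finite binary words, the block of a word of length
    n realizing the n-th configuration: the blocks along the prefixes of an
    infinite word form a PP-rich set, and two different words share only
    finitely many prefixes.  For (2), index the blocks by pairs (l, m) and take
    the rows, adding the unused elements of A to row 0. *)

Definition admissible (R : seq {poly nat}) : Prop :=
  R <> [::] /\ forall f, f \in R -> inPP f.

Definition realized_at (B : nat -> Prop) (R : seq {poly nat}) (a x : nat) : Prop :=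
  0 < a /\ 0 < x /\ forall f, f \in R -> B (a + f.[x]).

Definition realizes (B : nat -> Prop) (R : seq {poly nat}) : Prop :=
  exists a x : nat, realized_at B R a x.

Lemma PP_richP A : PP_rich A <-> forall R, admissible R -> realizes A R.
Proof. by split=> [HA R [] | HA R Rn Rin]; apply: HA. Qed.

Lemma realizes_sub (B B' : nat -> Prop) R :
  (forall n, B n -> B' n) -> realizes B R -> realizes B' R.
Proof.
by move=> BB' [a [x [a_gt0 [x_gt0 HR]]]]; exists a, x; do 2!split=> //; move=> f /HR /BB'.
Qed.

Lemma PP_rich_sub (A B : nat -> Prop) :
  (forall n, A n -> B n) -> PP_rich A -> PP_rich B.
Proof. by move=> AB /PP_richP HA; apply/PP_richP => R /HA; apply: realizes_sub. Qed.

Lemma admissibleX : admissible [:: 'X].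
Proof.
split=> // f; rewrite inE => /eqP ->; split; first by rewrite coefX.
by move=> x x_gt0; rewrite hornerX.
Qed.

Lemma horner_addXn (f : {poly nat}) (m x : nat) : ((f + 'X *+ m)%R).[x] = f.[x] + x * m.
Proof. by rewrite hornerD hornerMn hornerX -mulr_natr natn. Qed.

Lemma inPP_addXn (f : {poly nat}) (m : nat) : inPP f -> inPP ((f + 'X *+ m)%R).
Proof.
case=> f0 f_pos; split; first by rewrite coefD coefMn coefX f0 mul0rn.
by move=> x /f_pos f_x_gt0; rewrite horner_addXn ltn_addr.
Qed.

Lemma PP_rich_above A m R :
  PP_rich A -> admissible R -> realizes (fun n => A n /\ m < n) R.
Proof.
move=> HA [Rn Rin].
have [||a [x [a_gt0 [x_gt0 HR]]]] := HA [seq (f + 'X *+ m)%R | f <- R].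
- by case: R Rn {Rin}.
- by move=> g /mapP [f /Rin f_PP ->]; apply: inPP_addXn.
exists (a + x * m), x; split; first by rewrite addn_gt0 a_gt0.
split=> // f fR; have := HR _ (map_f (fun f => (f + 'X *+ m)%R) fR).
rewrite horner_addXn addnAC -addnA => A_af; split=> //.
have : m <= x * m by rewrite leq_pmull.
lia.
Qed.

Lemma PP_rich_unbounded A : PP_rich A -> ~ finite_nat A.
Proof.
move=> HA [m Am_lt].
have [a [x [_ [_ HR]]]] := PP_rich_above m HA admissibleX.
have [/Am_lt lt_m m_lt] := HR _ (mem_head _ _).
by have := ltn_trans m_lt lt_m; rewrite ltnn.
Qed.

Lemma admissible_enumeration :
  exists cfg : nat -> seq {poly nat},
    (forall n, admissible (cfg n)) /\ forall R, admissible R -> exists n, cfg n = R.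
Proof.
pose dec n : seq {poly nat} := [seq Poly s | s <- odflt [::] (@unpickle (seq (seq nat)) n)].
exists (fun n => if excluded_middle_informative (admissible (dec n)) then dec n
                 else [:: 'X]); split.
  by move=> n; destruct excluded_middle_informative => //; exact: admissibleX.
move=> R R_adm; exists (pickle [seq polyseq f | f <- R]).
have -> : dec (pickle [seq polyseq f | f <- R]) = R.
  by rewrite /dec pickleK /= -map_comp map_id_in // => f _; apply: polyseqK.
by destruct excluded_middle_informative.
Qed.

Section Blocks.

Variables (A : nat -> Prop) (rho : nat -> seq {poly nat}) (pick : nat -> nat -> nat * nat).
Hypothesis pickP : forall m k,
  realized_at (fun n => A n /\ m < n) (rho k) (pick m k).1 (pick m k).2.

Definition block (m k : nat) : seq nat :=
  [seq (pick m k).1 + f.[(pick m k).2] | f <- rho k].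

Fixpoint block_bound (k : nat) : nat :=
  if k is k'.+1 then
    maxn (block_bound k') (\max_(z <- block (block_bound k') k') z)
  else 0.

Let C k := block (block_bound k) k.

Lemma block_bound_homo : {homo block_bound : j k / j <= k}.
Proof. by apply: homo_leq => // [j i k|k]; [apply: leq_trans | apply: leq_maxl]. Qed.

Lemma realizes_block k : realizes (fun z => z \in C k) (rho k).
Proof.
have [a_gt0 [x_gt0 _]] := pickP (block_bound k) k.
exists (pick (block_bound k) k).1, (pick (block_bound k) k).2; do 2!split=> //.
by move=> f fR; apply: (map_f (fun f => _ + f.[_])).
Qed.

Lemma block_sub k z : z \in C k -> A z /\ block_bound k < z.
Proof. by case/mapP=> f fR ->; have [_ [_]] := pickP (block_bound k) k; apply. Qed.

Lemma mem_block_bounds k z :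
  z \in C k -> block_bound k < z <= block_bound k.+1.
Proof.
move=> z_in; rewrite (proj2 (block_sub z_in)) /=.
by apply: leq_trans (leq_maxr _ _); apply: leq_bigmax_seq.
Qed.

End Blocks.

Lemma PP_rich_blocks A (rho : nat -> seq {poly nat}) :
  PP_rich A -> (forall k, admissible (rho k)) ->
  exists (C : nat -> nat -> Prop) (b : nat -> nat),
    [/\ forall k z, C k z -> A z,
        forall k, realizes (C k) (rho k),
        {homo b : j k / j <= k} &
        forall k z, C k z -> b k < z <= b k.+1].
Proof.
move=> HA rho_adm.
have [p pP] : exists p : nat * nat -> nat * nat, forall mk,
    realized_at (fun n => A n /\ mk.1 < n) (rho mk.2) (p mk).1 (p mk).2.
  apply: (choice (fun mk (ax : nat * nat) =>
    realized_at (fun n => A n /\ mk.1 < n) (rho mk.2) ax.1 ax.2)) => -[m k].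
  by have [a [x ?]] := PP_rich_above m HA (rho_adm k); exists (a, x).
pose pick m k := p (m, k).
have pickP m k : realized_at (fun n => A n /\ m < n) (rho k) (pick m k).1 (pick m k).2
  := pP (m, k).
exists (fun k z => z \in block rho pick (block_bound rho pick k) k), (block_bound rho pick).
split.
- by move=> k z /(block_sub pickP) [].
- exact: realizes_block pickP.
- exact: block_bound_homo.
- exact: mem_block_bounds pickP.
Qed.

Lemma interval_blocks_disjoint (C : nat -> nat -> Prop) (b : nat -> nat) :
  {homo b : j k / j <= k} -> (forall k z, C k z -> b k < z <= b k.+1) ->
  forall j k z, C j z -> C k z -> j = k.
Proof.
move=> b_homo Cb.
suff lt_disj j k z : j < k -> C j z -> C k z -> False.
  move=> j k z Cj Ck; case: (ltngtP j k) => // [jk | kj].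
  - by case: (lt_disj _ _ _ jk Cj Ck).
  - by case: (lt_disj _ _ _ kj Ck Cj).
move=> jk /Cb /andP [_ z_le] /Cb /andP [lt_z _].
by have := leq_ltn_trans (leq_trans z_le (b_homo _ _ jk)) lt_z; rewrite ltnn.
Qed.

Lemma PP_rich_almost_disjoint_family A : PP_rich A ->
  exists F : (nat -> bool) -> (nat -> Prop),
    (forall i n, F i n -> A n) /\
    (forall i, ~ finite_nat (F i)) /\
    (forall i j, i <> j -> F i <> F j) /\
    (forall i j, i <> j -> finite_nat (fun n => F i n /\ F j n)) /\
    (forall i, PP_rich (F i)).
Proof.
move=> HA; have [cfg [cfg_adm cfg_onto]] := admissible_enumeration.
pose len k := size (odflt [::] (@unpickle (seq bool) k)).
have [C [b [CA Ccfg b_homo Cb]]] :=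
  PP_rich_blocks HA (fun k => cfg_adm (len k)).
have C_disj := interval_blocks_disjoint b_homo Cb.
pose F (i : nat -> bool) z := exists n, C (pickle (mkseq i n)) z.
have F_rich i : PP_rich (F i).
  apply/PP_richP => R /cfg_onto [n <-].
  have := Ccfg (pickle (mkseq i n)); rewrite /len pickleK size_mkseq.
  by apply: realizes_sub => z; exists n.
have F_ad i j : i <> j -> finite_nat (fun z => F i z /\ F j z).
  move=> ij; have [d ij_d] : exists d, i d <> j d.
    by apply: not_all_ex_not => ij_eq; apply/ij/functional_extensionality.
  (* Shared blocks sit at common prefixes, which have length at most d. *)
  exists (b (\max_(n < d.+1) pickle (mkseq i n)).+1).+1 => z [[n Ciz] [n' Cjz]].
  have ij_n := pcan_inj pickleK (C_disj _ _ _ Ciz Cjz).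
  have nn' : n = n' by rewrite -(size_mkseq i n) ij_n size_mkseq.
  subst n'; have n_le_d : n < d.+1.
    rewrite ltnS leqNgt; apply/negP => dn; apply: ij_d.
    by rewrite -(nth_mkseq false i dn) ij_n nth_mkseq.
  case/andP: (Cb _ _ Ciz) => _ z_le; rewrite ltnS (leq_trans z_le) // b_homo //.
  exact: (leq_bigmax (F := fun n : 'I_d.+1 => pickle (mkseq i n)) (Ordinal n_le_d)).
exists F; split; last split; last split; last split => //.
- by move=> i z [n /CA].
- by move=> i; apply/PP_rich_unbounded/F_rich.
- move=> i j ij Fij; apply: (PP_rich_unbounded (F_rich i)).
  by have [m Hm] := F_ad i j ij; exists m => z Fiz; apply: Hm; rewrite -Fij.
Qed.

Lemma PP_rich_disjoint_family A : PP_rich A ->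
  exists H : nat -> nat -> Prop,
    [/\ forall l n, H l n -> A n,
        forall k l n, k <> l -> H k n -> H l n -> False &
        forall l, PP_rich (H l)].
Proof.
move=> HA; have [cfg [cfg_adm cfg_onto]] := admissible_enumeration.
pose row_col k := odflt (0, 0) (@unpickle (nat * nat)%type k).
have [C [b [CA Ccfg b_homo Cb]]] :=
  PP_rich_blocks HA (fun k => cfg_adm (row_col k).2).
have C_disj := interval_blocks_disjoint b_homo Cb.
exists (fun l z => exists m : nat, C (pickle (l : nat, m)) z); split.
- by move=> l z [m /CA].
- move=> k l z kl [m Ckz] [m' Clz]; apply: kl.
  by case: (pcan_inj pickleK (C_disj _ _ _ Ckz Clz)).
- move=> l; apply/PP_richP => R /cfg_onto [m <-].
  have := Ccfg (pickle (l, m)); rewrite /row_col pickleK /=.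
  by apply: realizes_sub => z; exists m.
Qed.

Lemma PP_rich_partition_of_disjoint A (H : nat -> nat -> Prop) :
  (forall l n, H l n -> A n) ->
  (forall k l n, k <> l -> H k n -> H l n -> False) ->
  (forall l, PP_rich (H l)) ->
  exists G : nat -> (nat -> Prop),
    (forall n, A n <-> exists k, G k n) /\
    (forall k l n, k <> l -> G k n -> G l n -> False) /\
    (forall k, PP_rich (G k)).
Proof.
move=> HA H_disj H_rich.
exists (fun l n => H l n \/ [/\ l = 0, A n & forall k, ~ H k n]); split; last split.
- move=> n; split=> [An | [l [/HA | [_ An _]]] //].
  have [[k Hkn] | noH] := classic (exists k, H k n); first by exists k; left.
  by exists 0; right; split=> // k Hkn; apply: noH; exists k.
- move=> k l n kl [Hk | [k0 _ noHk]] [Hl | [l0 _ noHl]].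
  + exact: H_disj kl Hk Hl.
  + exact: noHl Hk.
  + exact: noHk Hl.
  + by apply: kl; rewrite k0 l0.
- by move=> l; apply: PP_rich_sub (H_rich l) => n Hn; left.
Qed.

Theorem theorem5p7 :
  forall A : nat -> Prop, subset_N A -> PP_rich A ->
  (* (1) a family of 2^omega (indexed injectively by nat -> bool)
         almost disjoint subsets of A, each PP-rich *)
  (exists F : (nat -> bool) -> (nat -> Prop),
      (forall i n, F i n -> A n) /\
      (forall i, ~ finite_nat (F i)) /\
      (forall i j, i <> j -> F i <> F j) /\
      (forall i j, i <> j -> finite_nat (fun n => F i n /\ F j n)) /\
      (forall i, PP_rich (F i)))
  /\
  (* (2) a splitting of A into omega pairwise disjoint PP-rich subsets *)
  (exists G : nat -> (nat -> Prop),
      (forall n, A n <-> exists k, G k n) /\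
      (forall k l n, k <> l -> G k n -> G l n -> False) /\
      (forall k, PP_rich (G k))).
Proof.
move=> A _ A_rich; split; first exact: PP_rich_almost_disjoint_family.
have [H [HA H_disj H_rich]] := PP_rich_disjoint_family A_rich.
exact: PP_rich_partition_of_disjoint HA H_disj H_rich.
Qed.
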